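(* Let $X$ be a K3 surface with $\rho(X)=2$, let $a_1,b_1,c\in\mathbb N$, and let $\widetilde H\in N(X)$ be primitive with $\widetilde H^2=2a_1b_1c^2$ and $\widetilde H\cdot N(X)=\gamma\mathbb Z$ where $\gamma\mid 2a_1b_1$. Put $n=2a_1b_1c^2/\gamma$. Let $K(\widetilde H)=\widetilde H^\perp=\mathbb Zf(\widetilde H)$ in $N(X)$ and define $\delta$ by $\det N(X)=-\gamma\delta$. Then $\delta\in\mathbb N$, $f(\widetilde H)^2=-2a_1b_1c^2\delta/\gamma$, and there is $\mu$ coprime to $n$ with $\delta\equiv\mu^2\gamma\pmod{4a_1b_1c^2/\gamma}$ such that $$N(X)=\Big[\widetilde H,\ f(\widetilde H),\ \frac{\mu\widetilde H+f(\widetilde H)}{n}\Big]=\Big\{\frac{x\widetilde H+yf(\widetilde H)}{n}:\ x,y\in\mathbb Z,\ x\equiv\mu y\pmod n\Big\},$$ and for such $z=(x\widetilde H+yf(\widetilde H))/n$ one has $z^2=(\gamma x^2-\delta y^2)/n$. The class $\pm\mu\bmod n$ (the invariant of the pair $\widetilde H\in N(X)$) is independent of the sign of $f(\widetilde H)$ up to $\pm$. For any primitive $P\in N(X)$ with $P^2=2a_1b_1c^2$, $P\cdot N(X)=\gamma\mathbb Z$ and the same invariant $\pm\mu$, there is an isometry $\phi\in O(N(X))$ with $\phi(\widetilde H)=P$.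
   Context: $N(X)$ denotes the Picard lattice of the K3 surface $X$ (an even hyperbolic lattice of rank $\rho(X)$). For a primitive $P\in N(X)$ with $P^2=2a_1b_1c^2$ and $P\cdot N(X)=\gamma\mathbb Z$, its invariant is the class $\pm\mu_P\bmod n$ of an integer $\mu_P$ with $(\mu_PP+f(P))/n\in N(X)$, where $f(P)$ generates $P^\perp$ in $N(X)$. $O(N(X))$ is the isometry group of $N(X)$. *)

From HB Require Import structures.
From mathcomp Require Import all_boot all_order all_algebra.
Set Implicit Arguments. Unset Strict Implicit. Unset Printing Implicit Defensive.
Import Order.TTheory GRing.Theory Num.Theory.
Local Open Scope ring_scope.

(* A rank-2 even lattice N, written in a Z-basis (e1,e2) with Gram matrix
     [[2a, b], [b, 2c]]   (a b c : int).
   Lattice vectors are pairs of integers (coordinates in the basis). *)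
Definition vec := (int * int)%type.

Definition vadd (u v : vec) : vec := (u.1 + v.1, u.2 + v.2).
Definition vscale (k : int) (u : vec) : vec := (k * u.1, k * u.2).

Definition bil (a b c : int) (u v : vec) : int :=
  2 * a * u.1 * v.1 + b * (u.1 * v.2 + u.2 * v.1) + 2 * c * u.2 * v.2.

Definition gram_det (a b c : int) : int := 4 * a * c - b ^+ 2.

(* N is hyperbolic (signature (1,1)) *)
Definition hyperbolic (a b c : int) : Prop := gram_det a b c < 0.

Definition primitive (v : vec) : Prop := gcdz v.1 v.2 = 1.

Definition pairing_ideal (a b c : int) (P : vec) (g : int) : Prop :=
  forall k : int, (exists v : vec, bil a b c P v = k) <-> (g %| k)%Z.

Definition gen_perp (a b c : int) (P f : vec) : Prop :=
  forall v : vec, bil a b c P v = 0 <-> exists k : int, v = vscale k f.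

(* (w / n) belongs to N, i.e. n divides w in the lattice *)
Definition divisible_in (n : int) (w : vec) : Prop :=
  exists z : vec, vscale n z = w.

(* m is a representative of the invariant of P (w.r.t. modulus n):
   (m P + f(P)) / n is in N for some generator f(P) of P^perp *)
Definition is_invariant (a b c n : int) (P : vec) (m : int) : Prop :=
  exists fP : vec, gen_perp a b c P fP /\ divisible_in n (vadd (vscale m P) fP).

Definition pm_eq (n m m' : int) : Prop :=
  (m == m' %[mod n])%Z \/ (m == - m' %[mod n])%Z.

(* isometries of N: Z-linear automorphisms (matrix [[p, q], [r, s]] acting on
   coordinate columns, with determinant +-1) preserving the form *)
Definition apply_mx (p q r s : int) (v : vec) : vec :=
  (p * v.1 + q * v.2, r * v.1 + s * v.2).

Definition lattice_isometry (a b c : int) (p q r s : int) : Prop :=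
  (p * s - q * r = 1 \/ p * s - q * r = -1) /\
  forall u v : vec, bil a b c (apply_mx p q r s u) (apply_mx p q r s v) = bil a b c u v.

From HB Require Import structures.
From mathcomp Require Import all_boot all_order all_algebra.
From mathcomp Require Import zify ring.
Import Order.TTheory GRing.Theory Num.Theory.
Set Implicit Arguments. Unset Strict Implicit. Unset Printing Implicit Defensive.
Local Open Scope ring_scope.

(* Since H.N = gZ, we can write H.v = g (l.v) with l primitive; then H^perp is
   spanned by the rotated vector rot90 l, so f = +-rot90 l and l.H = H^2/g = n.
   Cramer's rule n v = (l.v) H + e (v x H) f writes every lattice vector in the
   basis (H, f) with denominator n, and a vector s with s.H = 1 shows that the
   coefficients satisfy x = mu y (mod n) for mu = e (l x s).  The Gram matrix of
   (H, f) is diag(g n, -n delta), which gives the norm formula, and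
   delta = mu^2 g (mod 2n) because all norms are even.  If P has the same norm,
   pairing ideal and invariant, replacing (H, f) by (P, f_P) in the same formula
   defines an integral map sending H to P, and it is an isometry because both
   pairs have the same Gram matrix. *)

Definition dot (u v : vec) : int := u.1 * v.1 + u.2 * v.2.
Definition cross (u v : vec) : int := u.1 * v.2 - u.2 * v.1.
Definition rot90 (u : vec) : vec := (u.2, - u.1).
Definition gram (a b c : int) (u : vec) : vec :=
  (2 * a * u.1 + b * u.2, b * u.1 + 2 * c * u.2).

Lemma vscaleA k k' (u : vec) : vscale k (vscale k' u) = vscale (k * k') u.
Proof. by rewrite /vscale /=; congr pair; ring. Qed.

Lemma vscale1 (u : vec) : vscale 1 u = u.
Proof. by case: u => u1 u2; rewrite /vscale /= !mul1r. Qed.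

Lemma vscale_eq_id m (u : vec) : vscale m u = u -> u != (0, 0) -> m = 1.
Proof.
case: u => u1 u2 [mu1 mu2] u_neq0; apply/eqP; rewrite -subr_eq0.
apply: contraNT u_neq0 => m_neq1.
have : (m - 1) * u1 == 0 by rewrite mulrBl mu1 mul1r subrr.
have : (m - 1) * u2 == 0 by rewrite mulrBl mu2 mul1r subrr.
by rewrite !mulf_eq0 (negbTE m_neq1) /= => /eqP -> /eqP ->.
Qed.

Lemma rot90Z k u : rot90 (vscale k u) = vscale k (rot90 u).
Proof. by rewrite /rot90 /vscale /= mulrN. Qed.

Lemma dotZl k u v : dot (vscale k u) v = k * dot u v.
Proof. by rewrite /dot /=; ring. Qed.

Lemma dotZr k u v : dot u (vscale k v) = k * dot u v.
Proof. by rewrite /dot /=; ring. Qed.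

Lemma dot_comb (w u v : vec) x y :
  dot w (vadd (vscale x u) (vscale y v)) = x * dot w u + y * dot w v.
Proof. by rewrite /dot /=; ring. Qed.

Lemma dot_rot90 (u : vec) : dot u (rot90 u) = 0.
Proof. by rewrite /dot /=; ring. Qed.

Lemma cramer (l u v : vec) :
  vscale (dot l u) v = vadd (vscale (dot l v) u) (vscale (cross v u) (rot90 l)).
Proof. by rewrite /vscale /vadd /dot /cross /=; congr pair; ring. Qed.

Lemma dot_eq0_rot90 (l v w : vec) :
  dot l w = 1 -> dot l v = 0 -> v = vscale (cross v w) (rot90 l).
Proof.
move=> lw lv; rewrite -[LHS]vscale1 -lw cramer lv.
by rewrite /vadd /vscale /= !mul0r !add0r.
Qed.

Section Form.
Variables a b c : int.

Lemma bilE u v : bil a b c u v = dot (gram a b c u) v.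
Proof. by rewrite /bil /dot /=; ring. Qed.

Lemma bil_vscale k u v : bil a b c (vscale k u) (vscale k v) = k * k * bil a b c u v.
Proof. by rewrite /bil /=; ring. Qed.

Lemma bil_comb x y x' y' u w :
  bil a b c (vadd (vscale x u) (vscale y w)) (vadd (vscale x' u) (vscale y' w)) =
  x * x' * bil a b c u u + (x * y' + y * x') * bil a b c u w + y * y' * bil a b c w w.
Proof. by rewrite /bil /=; ring. Qed.

Lemma bil_even u : (2 %| bil a b c u u)%Z.
Proof.
by apply/dvdzP; exists (a * u.1 ^+ 2 + b * u.1 * u.2 + c * u.2 ^+ 2); rewrite /bil; ring.
Qed.

Lemma bil_rot90_gram u :
  bil a b c (rot90 (gram a b c u)) (rot90 (gram a b c u)) = gram_det a b c * bil a b c u u.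
Proof. by rewrite /bil /gram_det /=; ring. Qed.

(* The adjugate of the Gram matrix sends gram P = g l back to (gram_det) P. *)
Lemma dvdz_gram_det g P l :
  primitive P -> gram a b c P = vscale g l -> (g %| gram_det a b c)%Z.
Proof.
rewrite /primitive => primP [gP1 gP2].
have [s1 [s2 bez]] := Bezoutz P.1 P.2; rewrite primP in bez.
apply/dvdzP; exists (s1 * (2 * c * l.1 - b * l.2) + s2 * (2 * a * l.2 - b * l.1)).
transitivity (gram_det a b c * (s1 * P.1 + s2 * P.2)); first by rewrite bez mulr1.
transitivity (s1 * (2 * c * (g * l.1) - b * (g * l.2)) + s2 * (2 * a * (g * l.2) - b * (g * l.1))).
  by rewrite -gP1 -gP2 /gram_det; ring.
ring.
Qed.

Lemma isometry_det p q r s :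
  gram_det a b c != 0 ->
  (forall u v, bil a b c (apply_mx p q r s u) (apply_mx p q r s v) = bil a b c u v) ->
  p * s - q * r = 1 \/ p * s - q * r = -1.
Proof.
move=> det_neq0 isom.
have gram_detE (u v : vec) :
    bil a b c u u * bil a b c v v - bil a b c u v ^+ 2 = cross u v ^+ 2 * gram_det a b c.
  by rewrite /bil /cross /gram_det; ring.
have crossE : cross (apply_mx p q r s (1, 0)) (apply_mx p q r s (0, 1)) = p * s - q * r.
  by rewrite /cross /apply_mx /=; ring.
have := gram_detE (apply_mx p q r s (1, 0)) (apply_mx p q r s (0, 1)).
rewrite !isom gram_detE crossE /cross /= mulr1 mulr0 subr0 expr1n => /(mulIf det_neq0).
by move/esym/eqP; rewrite sqrf_eq1 => /orP[] /eqP ->; [left | right].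
Qed.

Lemma pairing_ideal_dual P g :
  g != 0 -> pairing_ideal a b c P g ->
  exists2 l, gram a b c P = vscale g l & exists w, dot l w = 1.
Proof.
move=> g_neq0 pi.
have /dvdzP [l1 gP1] : (g %| (gram a b c P).1)%Z.
  by apply/(pi _).1; exists (1, 0); rewrite bilE /dot /=; ring.
have /dvdzP [l2 gP2] : (g %| (gram a b c P).2)%Z.
  by apply/(pi _).1; exists (0, 1); rewrite bilE /dot /=; ring.
have gramP : gram a b c P = vscale g (l1, l2).
  by rewrite /vscale /= [g * _]mulrC [g * _]mulrC -gP1 -gP2; case: (gram a b c P).
exists (l1, l2) => //.
have [w Pw] := (pi g).2 (dvdzz g); exists w.
by apply: (mulfI g_neq0); rewrite -dotZl -gramP -bilE Pw mulr1.
Qed.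

Lemma gen_perp_rot90 P g l w :
  g != 0 -> gram a b c P = vscale g l -> dot l w = 1 -> gen_perp a b c P (rot90 l).
Proof.
move=> g_neq0 gramP lw v; rewrite bilE gramP dotZl.
split=> [/eqP | [k ->]].
  rewrite mulf_eq0 (negbTE g_neq0) => /eqP lv.
  by exists (cross v w); apply: dot_eq0_rot90 lw lv.
by rewrite /dot /rot90 /vscale /=; ring.
Qed.

Lemma gen_perp_uniq P f f' :
  gen_perp a b c P f -> gen_perp a b c P f' -> exists2 e, e ^+ 2 = 1 & f' = vscale e f.
Proof.
move=> perp perp'.
have [k f'E] := (perp f').1 ((perp' f').2 (ex_intro _ 1 (esym (vscale1 f')))).
have [k' fE] := (perp' f).1 ((perp f).2 (ex_intro _ 1 (esym (vscale1 f)))).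
have [f0 | f_neq0] := eqVneq f (0, 0).
  by exists 1; rewrite ?expr1n // vscale1 f'E f0 /vscale /= !mulr0.
exists k => //; apply/eqP; rewrite sqrf_eq1; apply: (@intUnitRing.unitzPl _ k').
by apply: vscale_eq_id f_neq0; rewrite -vscaleA -f'E -fE.
Qed.

Lemma gen_perpN P f : gen_perp a b c P f -> gen_perp a b c P (vscale (-1) f).
Proof.
move=> perp v; rewrite perp; split=> -[k ->]; exists (- k); rewrite vscaleA.
  by rewrite mulrNN mulr1.
by rewrite mulrN1.
Qed.

Lemma gen_perp_norm P g f :
  g != 0 -> pairing_ideal a b c P g -> gen_perp a b c P f ->
  g ^+ 2 * bil a b c f f = gram_det a b c * bil a b c P P.
Proof.
move=> g_neq0 pi perp; have [l gramP [w lw]] := pairing_ideal_dual g_neq0 pi.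
have [e e2 ->] := gen_perp_uniq (gen_perp_rot90 g_neq0 gramP lw) perp.
by rewrite -bil_rot90_gram gramP rot90Z !bil_vscale -expr2 e2; ring.
Qed.

End Form.

Lemma divisible_inZ n k w : divisible_in n w -> divisible_in n (vscale k w).
Proof. by case=> z <-; exists (vscale k z); rewrite !vscaleA mulrC. Qed.

Lemma divisible_in_congr n x x' (u w : vec) :
  (x == x' %[mod n])%Z ->
  divisible_in n (vadd (vscale x u) w) -> divisible_in n (vadd (vscale x' u) w).
Proof.
rewrite eqz_mod_dvd => /dvdzP [t xE] [z zE].
exists (vadd z (vscale (- t) u)); move: zE.
rewrite /vadd /vscale /= => -[z1E z2E]; congr pair.
  by transitivity (n * z.1 - t * n * u.1); [ring | rewrite z1E -xE; ring].
by transitivity (n * z.2 - t * n * u.2); [ring | rewrite z2E -xE; ring].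
Qed.

Lemma pm_eq_sym n m m' : pm_eq n m m' -> pm_eq n m' m.
Proof.
rewrite /pm_eq !eqz_mod_dvd => -[d | d].
  by left; rewrite -opprB rpredN.
by right; have -> : m' - - m = m - - m' by ring.
Qed.

Lemma pm_eq_trans n m1 m2 m3 : pm_eq n m1 m2 -> pm_eq n m2 m3 -> pm_eq n m1 m3.
Proof.
rewrite /pm_eq !eqz_mod_dvd => -[] d12 [] d23.
- left; have -> : m1 - m3 = (m1 - m2) + (m2 - m3) by ring.
  by rewrite rpredD.
- right; have -> : m1 - - m3 = (m1 - m2) + (m2 - - m3) by ring.
  by rewrite rpredD.
- right; have -> : m1 - - m3 = (m1 - - m2) - (m2 - m3) by ring.
  by rewrite rpredB.
- left; have -> : m1 - m3 = (m1 - - m2) - (m2 - - m3) by ring.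
  by rewrite rpredB.
Qed.

Lemma is_invariant_pm_eq a b c n P m m' :
  is_invariant a b c n P m -> pm_eq n m m' -> is_invariant a b c n P m'.
Proof.
move=> [f [perp divf]] [mm' | mm'].
  by exists f; split=> //; exact: divisible_in_congr mm' divf.
exists (vscale (-1) f); split; first exact: gen_perpN.
have := divisible_inZ (-1) (divisible_in_congr mm' divf).
by congr divisible_in; rewrite /vadd /vscale /=; congr pair; ring.
Qed.

(* [l] is the primitive vector with H.v = g (l.v), [s] satisfies s.H = 1, and
   [f] = +-rot90 l is the generator f(H) of H^perp. *)
Record adapted_frame (a b c g n e : int) (H l s f : vec) : Prop := AdaptedFrame {
  frame_gram : gram a b c H = vscale g l;
  frame_dual : dot l H = n;
  frame_bezout : dot s H = 1;
  frame_unimodular : exists w, dot l w = 1;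
  frame_sign : e ^+ 2 = 1;
  frame_perp : f = vscale e (rot90 l) }.

Lemma adapted_frame_exists a b c g n H f :
  g != 0 -> primitive H -> bil a b c H H = g * n ->
  pairing_ideal a b c H g -> gen_perp a b c H f ->
  exists l s e, adapted_frame a b c g n e H l s f.
Proof.
move=> g_neq0 primH HH piH perpH.
have [l gramH [w lw]] := pairing_ideal_dual g_neq0 piH.
have [e e2 fE] := gen_perp_uniq (gen_perp_rot90 g_neq0 gramH lw) perpH.
have [u [v uv]] := Bezoutz H.1 H.2.
exists l, (u, v), e; split=> //; last by exists w.
  by apply: (mulfI g_neq0); rewrite -dotZl -gramH -bilE HH.
by rewrite /dot -primH -uv.
Qed.

Section NormalForm.
Variables (a b c g n delta e : int) (H l s f : vec).
Hypothesis fr : adapted_frame a b c g n e H l s f.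
Hypotheses (g_neq0 : g != 0) (n_neq0 : n != 0).
Hypothesis detN : gram_det a b c = - (g * delta).

Let gramH := frame_gram fr.
Let lH := frame_dual fr.
Let sH := frame_bezout fr.
Let e2 := frame_sign fr.
Let fE := frame_perp fr.

Let mu := e * cross l s.

Lemma vscale_decomp v :
  vscale n v = vadd (vscale (dot l v) H) (vscale (e * cross v H) f).
Proof. by rewrite fE vscaleA -lH cramer mulrAC -expr2 e2 mul1r. Qed.

Lemma divisible_in_mu : divisible_in n (vadd (vscale mu H) f).
Proof.
exists (vscale e (rot90 s)).
move: sH lH; rewrite fE /mu /dot /cross /vadd /vscale /= => s1 <-; congr pair.
  by rewrite -[e * l.2]mulr1 -s1; ring.
by rewrite -[e * - l.1]mulr1 -s1; ring.
Qed.

Lemma coeffs_mod_n x y z :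
  vscale n z = vadd (vscale x H) (vscale y f) -> x - mu * y = n * dot s z.
Proof.
move=> /(congr1 (dot s)); rewrite dotZr dot_comb sH fE dotZr => ->.
by rewrite /mu /dot /cross /=; ring.
Qed.

Lemma lattice_coords z :
  exists x y, (x == mu * y %[mod n])%Z /\ vscale n z = vadd (vscale x H) (vscale y f).
Proof.
exists (dot l z), (e * cross z H); split; last exact: vscale_decomp.
rewrite eqz_mod_dvd; apply/dvdzP; exists (dot s z).
by rewrite [RHS]mulrC (coeffs_mod_n (vscale_decomp z)).
Qed.

Lemma coprimez_mu : coprimez mu n.
Proof.
have [w lw] := frame_unimodular fr.
apply/coprimezP; exists (e * cross w H, dot s w) => /=.
have := coeffs_mod_n (vscale_decomp w); rewrite lw => dE.
by rewrite [_ * n]mulrC -dE; ring.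
Qed.

Lemma bil_H_H : bil a b c H H = g * n.
Proof. by rewrite bilE gramH dotZl lH. Qed.

Lemma bil_H_f : bil a b c H f = 0.
Proof. by rewrite bilE gramH fE dotZl dotZr dot_rot90 !mulr0. Qed.

Lemma bil_f_f : bil a b c f f = - (n * delta).
Proof.
apply: (mulfI (expf_neq0 2 g_neq0)).
rewrite fE bil_vscale -expr2 e2 mul1r.
by rewrite -bil_vscale -rot90Z -gramH bil_rot90_gram detN bil_H_H; ring.
Qed.

Lemma norm_comb x y z :
  vscale n z = vadd (vscale x H) (vscale y f) ->
  n * bil a b c z z = g * x ^+ 2 - delta * y ^+ 2.
Proof.
move=> zE; apply: (mulfI (mulf_neq0 g_neq0 n_neq0)).
transitivity (g * bil a b c (vscale n z) (vscale n z)); first by rewrite bil_vscale; ring.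
by rewrite zE bil_comb bil_H_H bil_H_f bil_f_f; ring.
Qed.

Lemma delta_congr : (delta == mu ^+ 2 * g %[mod 2 * n])%Z.
Proof.
have [z zE] := divisible_in_mu.
have := norm_comb (etrans zE (congr1 _ (esym (vscale1 f)))).
have /dvdzP [k ->] := bil_even a b c z.
rewrite eqz_mod_dvd expr1n mulr1 => normE.
apply/dvdzP; exists (- k).
by rewrite (_ : delta - _ = - (n * (k * 2))); [ring | rewrite normE; ring].
Qed.

Lemma divisible_in_comb x y :
  (x == mu * y %[mod n])%Z -> divisible_in n (vadd (vscale x H) (vscale y f)).
Proof.
rewrite eq_sym => xE; apply: divisible_in_congr xE _.
have -> : vadd (vscale (mu * y) H) (vscale y f) = vscale y (vadd (vscale mu H) f).
  by rewrite /vadd /vscale /=; congr pair; ring.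
exact: divisible_inZ divisible_in_mu.
Qed.

Lemma is_invariant_mu : gen_perp a b c H f -> is_invariant a b c n H mu.
Proof. by move=> perpH; exists f; split=> //; exact: divisible_in_mu. Qed.

Lemma pm_eq_of_is_invariant m :
  gen_perp a b c H f -> is_invariant a b c n H m -> pm_eq n m mu.
Proof.
move=> perpH [f' [perp' [z zE]]].
have [e' e'2 f'E] := gen_perp_uniq perpH perp'.
rewrite f'E in zE; have := coeffs_mod_n zE.
move/eqP: e'2; rewrite sqrf_eq1 => /orP[] /eqP -> dE; [left | right];
  by rewrite eqz_mod_dvd; apply/dvdzP; exists (dot s z); rewrite mulrC -dE; ring.
Qed.

(* The map v |-> (s.v) P + e (v x H) z_P, where n z_P = mu P + f_P, satisfies
   n phi(v) = (l.v) P + e (v x H) f_P, the analogue of vscale_decomp for P. *)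
Lemma isometry_onto P :
  gram_det a b c != 0 -> bil a b c P P = bil a b c H H ->
  pairing_ideal a b c P g -> is_invariant a b c n P mu ->
  exists p q r t, lattice_isometry a b c p q r t /\ apply_mx p q r t H = P.
Proof.
move=> det_neq0 PP piP [fP [perpP [zP zPE]]].
have PfP : bil a b c P fP = 0 by apply/(perpP fP).2; exists 1; rewrite vscale1.
have fPfP : bil a b c fP fP = bil a b c f f.
  apply: (mulfI (expf_neq0 2 g_neq0)).
  by rewrite (gen_perp_norm g_neq0 piP perpP) PP bil_f_f bil_H_H detN; ring.
set phi := apply_mx (s.1 * P.1 + e * H.2 * zP.1) (s.2 * P.1 - e * H.1 * zP.1)
                    (s.1 * P.2 + e * H.2 * zP.2) (s.2 * P.2 - e * H.1 * zP.2).
have phiE v : vscale n (phi v) = vadd (vscale (dot l v) P) (vscale (e * cross v H) fP).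
  have dE := coeffs_mod_n (vscale_decomp v).
  move: zPE; rewrite /phi /apply_mx /vadd /vscale /= => -[zP1 zP2]; congr pair.
    transitivity (n * dot s v * P.1 + e * cross v H * (n * zP.1)).
      by rewrite /dot /cross; ring.
    by rewrite zP1 -dE; ring.
  transitivity (n * dot s v * P.2 + e * cross v H * (n * zP.2)).
    by rewrite /dot /cross; ring.
  by rewrite zP2 -dE; ring.
have phi_isom u v : bil a b c (phi u) (phi v) = bil a b c u v.
  apply: (mulfI (mulf_neq0 n_neq0 n_neq0)); rewrite -!bil_vscale !phiE !vscale_decomp.
  by rewrite !bil_comb PP PfP fPfP bil_H_f.
exists (s.1 * P.1 + e * H.2 * zP.1), (s.2 * P.1 - e * H.1 * zP.1),
       (s.1 * P.2 + e * H.2 * zP.2), (s.2 * P.2 - e * H.1 * zP.2).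
split; first by split; [exact: isometry_det det_neq0 phi_isom | exact: phi_isom].
rewrite /apply_mx [RHS]surjective_pairing -[P.1 in RHS]mulr1 -[P.2 in RHS]mulr1 -sH /dot.
by congr pair; ring.
Qed.

End NormalForm.

Theorem proposition3p1p1
  (a b c : int) (a1 b1 c0 g : int) (H f : vec) :
  hyperbolic a b c ->
  0 < a1 -> 0 < b1 -> 0 < c0 ->
  primitive H ->
  bil a b c H H = 2 * a1 * b1 * c0 ^+ 2 ->
  0 < g ->
  pairing_ideal a b c H g ->
  (g %| 2 * a1 * b1)%Z ->
  gen_perp a b c H f ->
  let n := ((2 * a1 * b1 * c0 ^+ 2) %/ g)%Z in
  (exists delta : int,
     0 < delta /\
     gram_det a b c = - (g * delta) /\
     g * bil a b c f f = - (2 * a1 * b1 * c0 ^+ 2 * delta) /\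
     exists mu : int,
       coprimez mu n /\
       (delta == mu ^+ 2 * g %[mod 2 * n])%Z /\
       (* N = [H, f, (mu H + f)/n] = {(xH + yf)/n : x = mu y mod n} *)
       divisible_in n (vadd (vscale mu H) f) /\
       (forall z : vec, exists x y : int,
            (x == mu * y %[mod n])%Z /\ vscale n z = vadd (vscale x H) (vscale y f)) /\
       (forall x y : int, (x == mu * y %[mod n])%Z ->
            divisible_in n (vadd (vscale x H) (vscale y f))) /\
       (* z^2 = (g x^2 - delta y^2) / n *)
       (forall (x y : int) (z : vec), vscale n z = vadd (vscale x H) (vscale y f) ->
            n * bil a b c z z = g * x ^+ 2 - delta * y ^+ 2) /\
       (* mu represents the invariant of H *)
       is_invariant a b c n H mu /\
       (* uniqueness of P given the invariant *)
       (forall P : vec,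
          primitive P ->
          bil a b c P P = 2 * a1 * b1 * c0 ^+ 2 ->
          pairing_ideal a b c P g ->
          (exists muP : int, is_invariant a b c n P muP /\ pm_eq n muP mu) ->
          exists p q r s : int, lattice_isometry a b c p q r s /\ apply_mx p q r s H = P)) /\
  (* the invariant +-mu mod n of H is independent of the choice (sign) of f(H) *)
  (forall m m' : int, is_invariant a b c n H m -> is_invariant a b c n H m' -> pm_eq n m m').
Proof.
move=> hyp a1_gt0 b1_gt0 c0_gt0 primH HH g_gt0 piH g_dvd perpH n.
have g_neq0 : g != 0 by rewrite gt_eqF.
have ng : n * g = 2 * a1 * b1 * c0 ^+ 2 by rewrite /n divzK // dvdz_mulr.
clearbody n.
have n_neq0 : n != 0 by apply/eqP => n0; move: ng; rewrite n0 mul0r; nia.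
have HH' : bil a b c H H = g * n by rewrite HH -ng mulrC.
have [l [s [e fr]]] := adapted_frame_exists g_neq0 primH HH' piH perpH.
have [delta detN] : exists delta, gram_det a b c = - (g * delta).
  have /dvdzP [k kE] := dvdz_gram_det primH (frame_gram fr).
  by exists (- k); rewrite kE; ring.
split; last first.
  move=> m m' /(pm_eq_of_is_invariant fr perpH) mE /(pm_eq_of_is_invariant fr perpH) m'E.
  exact: pm_eq_trans mE (pm_eq_sym m'E).
exists delta; split; first by move: hyp; rewrite /hyperbolic detN; nia.
split=> //; split; first by rewrite (bil_f_f fr g_neq0 detN) -ng; ring.
exists (e * cross l s); split; first exact: (coprimez_mu fr).
split; first exact: (delta_congr fr).
split; first exact: (divisible_in_mu fr).
split; first exact: (lattice_coords fr).
split; first exact: (divisible_in_comb fr).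
split; first exact: (norm_comb fr).
split; first exact: (is_invariant_mu fr).
move=> P _ PP piP [m [invP mE]].
apply: (isometry_onto fr g_neq0 n_neq0 detN) => //; first exact: ltr0_neq0.
  by rewrite PP HH.
exact: (is_invariant_pm_eq invP mE).
Qed.
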